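(* Let $(E,\|\cdot\|)$ be a real Banach space and $\mathcal{C}\subset E$ a closed convex cone with $\mathbb{R}_+\mathcal{C}=\mathcal{C}$ and $\mathcal{C}\cap(-\mathcal{C})=\{0\}$. Assume: (H1) there are $\ell\in E'$ with $\|\ell\|=1$ and $K\in[1,\infty)$ with $\langle\ell,\phi\rangle\ge\frac1K\|\phi\|$ for all $\phi\in\mathcal{C}$; (H2) $\rho\in(0,1]$ is fixed such that $\mathcal{C}(\rho)=\{\phi\in\mathcal{C}:B(\phi,\rho\|\phi\|)\subset\mathcal{C}\}$ contains a nonzero element. Set $\mathcal{C}_{\ell=1}(\rho)=\{\phi\in\mathcal{C}(\rho):\langle\ell,\phi\rangle=1\}$. Let $\mathcal{M}\subset L(E)$ be a collection of operators such that, for some $1\le\vartheta<\infty$ and every $L\in\mathcal{M}$: (H3) $L(\mathcal{C}\setminus\{0\})\subset\mathcal{C}(\rho)\setminus\{0\}$, and (H4) $\frac1\vartheta\le\|L\|\le\vartheta$. Let $(\Omega,\mathcal{F},\mathbb{P})$ be a probability space with an invertible, measure-preserving, ergodic map $\tau$. Let $X=L^\infty(\Omega,E)$ be the Banach space of uniformly bounded Bochner measurable maps $\boldsymbol{\phi}=(\phi_\omega)_{\omega\in\Omega}:\Omega\to E$ with norm $\sup_\omega\|\phi_\omega\|$. Let $(\mathcal{L}_\omega)_{\omega\in\Omega}$ be a family with values in $\mathcal{M}$ such that $\mathbf{L}:X\to X$, $(\mathbf{L}\boldsymbol{\phi})_\omega=\mathcal{L}_{\tau^{-1}\omega}\phi_{\tau^{-1}\omega}$,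 is well defined (i.e. preserves Bochner measurability of sections). For $\boldsymbol{\phi}\in X$ with $\phi_\omega\in\mathcal{C}\setminus\{0\}$ for all $\omega$, define \[(\boldsymbol{\pi}(\boldsymbol{\phi}))_\omega=\frac{\mathcal{L}_{\tau^{-1}\omega}\phi_{\tau^{-1}\omega}}{\langle\ell,\mathcal{L}_{\tau^{-1}\omega}\phi_{\tau^{-1}\omega}\rangle}.\] Then $\boldsymbol{\pi}$ admits a unique fixed point section $\mathbf{f}=\boldsymbol{\pi}(\mathbf{f})\in X$ with $f_\omega\in\mathcal{C}_{\ell=1}(\rho)$ for all $\omega\in\Omega$.
   Context: A map $\Omega\to E$ is Bochner measurable if it is a uniform limit of $\mathcal{F}$-measurable maps with countable image. *)

From HB Require Import structures.
From mathcomp Require Import all_boot all_order all_algebra.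
From mathcomp Require Import all_classical all_reals all_analysis.
Set Implicit Arguments. Unset Strict Implicit. Unset Printing Implicit Defensive.
Import Order.TTheory GRing.Theory Num.Theory.
Import numFieldNormedType.Exports.
Local Open Scope classical_set_scope.
Local Open Scope ring_scope.

Definition opnorm {R : realType} {E F : normedModType R} (f : E -> F) : R :=
  sup [set `|f x| | x in [set x : E | `|x| <= 1]].

Definition convex_subset {R : realType} {E : lmodType R} (C : set E) :=
  forall x y (t : R), C x -> C y -> 0 <= t -> t <= 1 -> C (t *: x + (1 - t) *: y).

Definition proper_closed_cone {R : realType} {E : normedModType R} (C : set E) :=
  [/\ closed C, convex_subset C,
      (forall (t : R) x, 0 <= t -> C x -> C (t *: x)),
      C 0 & (forall x, C x -> C (- x) -> x = 0)].

Definition cone_rho {R : realType} {E : normedModType R} (C : set E) (rho : R) : set E :=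
  [set phi | C phi /\ ball phi (rho * `|phi|) `<=` C].

Definition cone_rho_l1 {R : realType} {E : normedModType R} (C : set E) (rho : R)
  (l : E -> R) : set E :=
  [set phi | cone_rho C rho phi /\ l phi = 1].

(* F-measurable maps Omega -> E with countable image (fibres measurable;
   for countably-valued maps into a metric space this is Borel measurability). *)
Definition countably_valued_measurable {d} {Omega : measurableType d} {E : Type}
  (g : Omega -> E) :=
  countable (range g) /\ forall x : E, measurable (g @^-1` [set x]).

Definition bochner_measurable {d} {Omega : measurableType d} {R : realType}
  {E : normedModType R} (f : Omega -> E) :=
  exists g : nat -> Omega -> E,
    (forall n, countably_valued_measurable (g n)) /\
    (forall e : R, 0 < e -> exists N : nat, forall n, (N <= n)%N ->
        forall w, `|g n w - f w| <= e).

Definition Linfty_section {d} {Omega : measurableType d} {R : realType}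
  {E : normedModType R} (f : Omega -> E) :=
  bochner_measurable f /\ exists M : R, forall w, `|f w| <= M.

Definition invertible_mp {d} {Omega : measurableType d} {R : realType}
  (P : probability Omega R) (tau taui : Omega -> Omega) :=
  [/\ cancel tau taui, cancel taui tau,
      measurable_fun setT tau, measurable_fun setT taui &
      forall A, measurable A -> P (tau @^-1` A) = P A].

Definition ergodic {d} {Omega : measurableType d} {R : realType}
  (P : probability Omega R) (tau : Omega -> Omega) :=
  forall A, measurable A -> tau @^-1` A = A -> P A = 0%E \/ P A = 1%E.

From HB Require Import structures.
From mathcomp Require Import all_boot all_order all_algebra.
From mathcomp Require Import all_classical all_reals all_analysis.
From mathcomp Require Import ring lra.
Import Order.TTheory GRing.Theory Num.Theory.
Import numFieldNormedType.Exports.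
Set Implicit Arguments. Unset Strict Implicit. Unset Printing Implicit Defensive.
Local Open Scope classical_set_scope.
Local Open Scope ring_scope.

(* Compare u, v in the cone C through the largest gap 1 - a/b such that
   a u <= v <= b u in the order of C, a bounded stand-in for Birkhoff's Hilbert
   projective distance log (b/a). Two nonzero points of C(rho) have gap at most 1,
   and an operator mapping C \ {0} into C(rho) \ {0} multiplies the gap by
   lam = 1 - (rho/2K)^2 (Birkhoff contraction). Normalized points with gap e are
   2Ke-close in norm, so the normalized iterates of a constant section converge
   uniformly at rate lam^n; the limit is a fixed point because normalization is
   Lipschitz where l (L phi) >= rho / (4 K vartheta), and two fixed sections have
   gap at most lam^n for all n, hence agree. Uniform limits of Bochner measurable
   maps are Bochner measurable, so the limit lies in X. *)

Section OperatorNorm.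
Variables (R : realType) (E F : normedModType R).

Lemma opnorm_has_sup (f : E -> F) :
  opnorm f != 0 -> has_sup [set `|f x| | x in [set x : E | `|x| <= 1]].
Proof. by move=> f0; apply: contrapT => /sup_out hs; move: f0; rewrite /opnorm hs eqxx. Qed.

Lemma opnorm_ler (f : {linear E -> F}) x : 0 < opnorm f -> `|f x| <= opnorm f * `|x|.
Proof.
move=> f_gt0; have [->|x0] := eqVneq x 0; first by rewrite linear0 !normr0 mulr0.
have nx : 0 < `|x| by rewrite normr_gt0.
have : `|f (`|x|^-1 *: x)| <= opnorm f.
  apply: sup_upper_bound; first by apply: opnorm_has_sup; rewrite gt_eqF.
  by exists (`|x|^-1 *: x) => //=; rewrite normrZ normfV normr_id mulVf ?gt_eqF.
by rewrite linearZ normrZ normfV normr_id ler_pdivrMl // mulrC.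
Qed.

Lemma opnorm_lt_witness (f : E -> F) a :
  0 <= a -> a < opnorm f -> exists2 x, `|x| <= 1 & a < `|f x|.
Proof.
move=> a0 af; have hs : has_sup [set `|f x| | x in [set x : E | `|x| <= 1]].
  by apply: opnorm_has_sup; rewrite gt_eqF // (le_lt_trans a0).
have af' : 0 < opnorm f - a by rewrite subr_gt0.
have [_ [x x1 <-]] := sup_adherent af' hs.
by rewrite /opnorm opprB addrCA subrr addr0; exists x.
Qed.

End OperatorNorm.

Lemma norm_scalar_le (R : realType) (E : normedModType R) (l : {scalar E}) x :
  opnorm l = 1 -> `|l x| <= `|x|.
Proof. by move=> l1; have := @opnorm_ler _ _ R^o l x; rewrite l1 mul1r; apply. Qed.

(* Vector identities in the span of u and w reduce to scalar ones, closed by [field]. *)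
Section TwoVectorCombination.
Variables (R : comPzRingType) (V : lmodType R) (u w : V).

Definition comb2 (p q : R) : V := p *: u + q *: w.

Lemma comb2Z k p q : k *: comb2 p q = comb2 (k * p) (k * q).
Proof. by rewrite /comb2 scalerDr !scalerA. Qed.

Lemma comb2B p q p' q' : comb2 p q - comb2 p' q' = comb2 (p - p') (q - q').
Proof. by rewrite /comb2 opprD addrACA -!scalerBl. Qed.

Lemma comb2_subl a : w - a *: u = comb2 (- a) 1.
Proof. by rewrite /comb2 scale1r scaleNr addrC. Qed.

Lemma comb2_subr b : b *: u - w = comb2 b (- 1).
Proof. by rewrite /comb2 scaleN1r. Qed.

End TwoVectorCombination.

Section Cone.
Variables (R : realType) (E : normedModType R) (C : set E).
Hypothesis coneC : proper_closed_cone C.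

Lemma cone0 : C 0.
Proof. by case: coneC. Qed.

Lemma coneZ t x : 0 <= t -> C x -> C (t *: x).
Proof. by case: coneC => _ _ + _ _; apply. Qed.

Lemma cone_rho_ballD rho y z : cone_rho C rho y -> `|z| < rho * `|y| -> C (y + z).
Proof. by case=> _ By zy; apply: By; rewrite -ball_normE /= opprD addNKr normrN. Qed.

Lemma cone_rhoZ rho t x : 0 < t -> cone_rho C rho x -> cone_rho C rho (t *: x).
Proof.
move=> t0 [Cx Bx]; split; first exact/coneZ/Cx/ltW.
move=> z; rewrite -ball_normE /= => hz.
have tN0 := lt0r_neq0 t0.
rewrite -[z](scalerKV tN0); apply/coneZ; first exact: ltW.
move: hz; rewrite normrZ gtr0_norm // mulrCA => hz.
apply: Bx; rewrite -ball_normE /= -{1}[x](scalerK tN0) -scalerBr normrZ.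
by rewrite gtr0_norm ?invr_gt0 // ltr_pdivrMl.
Qed.

Definition into_cone_rho rho (L : E -> E) :=
  forall phi, C phi -> phi != 0 -> cone_rho C rho (L phi) /\ L phi != 0.

Lemma into_cone_rho_cone rho (L : {linear E -> E}) phi :
  into_cone_rho rho L -> C phi -> C (L phi).
Proof.
move=> HL Cphi; have [->|phi0] := eqVneq phi 0; first by rewrite linear0; exact: cone0.
by have [[]] := HL _ Cphi phi0.
Qed.

(* C (v - a u) and C (b u - v) say that a u <= v <= b u in the order defined by C. *)
Definition osc_le (u v : E) (e : R) :=
  exists a b, [/\ 0 < a, a <= b, C (v - a *: u), C (b *: u - v) & 1 - a / b <= e].

Lemma osc_le_ge0 u v e : osc_le u v e -> 0 <= e.
Proof.
case=> a [b [a0 ab _ _]]; apply: le_trans.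
by rewrite subr_ge0 ler_pdivrMr ?mul1r // (lt_le_trans a0).
Qed.

Lemma osc_le_trans u v e e' : e <= e' -> osc_le u v e -> osc_le u v e'.
Proof. by move=> ee' [a [b [? ? ? ? ?]]]; exists a, b; split=> //; apply: le_trans ee'. Qed.

Lemma osc_le_scaled u a : 0 < a -> osc_le u (a *: u) 0.
Proof.
by move=> a0; exists a, a; rewrite subrr divff ?lt0r_neq0 // subrr; split=> //; exact: cone0.
Qed.

Lemma osc_leZ u v e p q : 0 < p -> 0 < q -> osc_le u v e -> osc_le (p *: u) (q *: v) e.
Proof.
move=> p0 q0 [a [b [a0 ab Cva Cbu ab_e]]].
have pN0 := lt0r_neq0 p0; have b0 := lt_le_trans a0 ab.
exists (q * a / p), (q * b / p); split.
- by rewrite divr_gt0 ?mulr_gt0.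
- by rewrite ler_pM2r ?invr_gt0 // ler_pM2l.
- rewrite scalerA mulfVK // -scalerA -scalerBr; exact/coneZ/Cva/ltW.
- rewrite scalerA mulfVK // -scalerA -scalerBr; exact/coneZ/Cbu/ltW.
- suff -> : q * a / p / (q * b / p) = a / b by [].
  by field; rewrite !lt0r_neq0.
Qed.

(* With X := W - a U and Y := b U - W, the new bounds come from
   W - a' U = (X - s' Y) / (1 + s') and b' U - W = (Y - s X) / (1 + s). *)
Lemma osc_le_shrink U W a b s s' :
  0 < a -> a <= b -> 0 < s -> 0 < s' -> s * s' <= 1 ->
  C ((W - a *: U) - s' *: (b *: U - W)) -> C ((b *: U - W) - s *: (W - a *: U)) ->
  osc_le U W ((1 - s * s') * (1 - a / b)).
Proof.
move=> a0 ab s0 s'0 ss'1 CX CY; have b0 := lt_le_trans a0 ab.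
have eX : W - a *: U = comb2 U W (- a) 1 by exact: comb2_subl.
have eY : b *: U - W = comb2 U W b (- 1) by exact: comb2_subr.
rewrite eX eY in CX CY.
exists ((b * s' + a) / (1 + s')), ((b + a * s) / (1 + s)); split.
- by rewrite divr_gt0 // ?addr_gt0 ?mulr_gt0.
- rewrite ler_pdivrMr ?addr_gt0 // mulrAC ler_pdivlMr ?addr_gt0 // -subr_ge0.
  suff -> : (b + a * s) * (1 + s') - (b * s' + a) * (1 + s) = (b - a) * (1 - s * s').
    by rewrite mulr_ge0 ?subr_ge0.
  by ring.
- rewrite comb2_subl.
  suff -> : comb2 U W (- ((b * s' + a) / (1 + s'))) 1 =
            (1 + s')^-1 *: (comb2 U W (- a) 1 - s' *: comb2 U W b (- 1)).
    by apply: coneZ CX; rewrite invr_ge0 addr_ge0 ?ltW.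
  by rewrite comb2Z comb2B comb2Z; congr comb2; field; rewrite lt0r_neq0 ?addr_gt0.
- rewrite comb2_subr.
  suff -> : comb2 U W ((b + a * s) / (1 + s)) (- 1) =
            (1 + s)^-1 *: (comb2 U W b (- 1) - s *: comb2 U W (- a) 1).
    by apply: coneZ CY; rewrite invr_ge0 addr_ge0 ?ltW.
  by rewrite comb2Z comb2B comb2Z; congr comb2; field; rewrite lt0r_neq0 ?addr_gt0.
- have den0 : 0 < (1 + s') * (b + a * s) by rewrite !(mulr_gt0, addr_gt0).
  have -> : 1 - (b * s' + a) / (1 + s') / ((b + a * s) / (1 + s)) =
            (1 - s * s') * ((b - a) / ((1 + s') * (b + a * s))).
    by field; rewrite !lt0r_neq0 ?addr_gt0 ?mulr_gt0.
  have -> : 1 - a / b = (b - a) / b by field; rewrite lt0r_neq0.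
  rewrite ler_wpM2l ?subr_ge0 // ler_wpM2l ?subr_ge0 // lef_pV2 ?posrE //.
  by rewrite mulrDl mul1r -addrA lerDl !(addr_ge0, mulr_ge0) // ltW.
Qed.

Variables (l : {scalar E}) (K : R).
Hypothesis K_gt0 : 0 < K.
Hypothesis l_ge : forall phi, C phi -> K^-1 * `|phi| <= l phi.

Lemma cone_norm_le phi : C phi -> `|phi| <= K * l phi.
Proof. by move=> /l_ge; rewrite ler_pdivrMl. Qed.

Lemma cone_l_ge0 phi : C phi -> 0 <= l phi.
Proof. by move=> /l_ge; apply: le_trans; rewrite mulr_ge0 ?invr_ge0 ?normr_ge0 ?ltW. Qed.

Lemma cone_l_gt0 phi : C phi -> phi != 0 -> 0 < l phi.
Proof.
by move=> /l_ge + phi0; apply: lt_le_trans; rewrite mulr_gt0 ?invr_gt0 ?normr_gt0.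
Qed.

Lemma osc_le_dist u v e :
  osc_le u v e -> C u -> l u = 1 -> l v = 1 -> `|u - v| <= 2 * K * e.
Proof.
move=> [a [b [a0 ab Cva Cbu gap]]] Cu lu lv.
have lva : l (v - a *: u) = 1 - a by rewrite linearB linearZ /= lu lv mulr1.
have lbu : l (b *: u - v) = b - 1 by rewrite linearB linearZ /= lu lv mulr1.
have a1 : 0 <= 1 - a by rewrite -lva cone_l_ge0.
have b1 : 1 <= b by rewrite -subr_ge0 -lbu cone_l_ge0.
have ae : 1 - a <= e.
  apply: le_trans gap.
  by rewrite lerD2l lerN2 ler_pdivrMr ?(lt_le_trans ltr01 b1) // ler_peMr ?(ltW a0).
have nu : `|u| <= K by rewrite -[K]mulr1 -lu cone_norm_le.
have nva : `|v - a *: u| <= K * (1 - a) by rewrite -lva cone_norm_le.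
have -> : u - v = (1 - a) *: u - (v - a *: u).
  by rewrite scalerBl scale1r opprB addrA subrK.
apply: le_trans (ler_normB _ _) _; rewrite normrZ ger0_norm //.
apply: le_trans (lerD (ler_wpM2l a1 nu) nva) _.
have -> : (1 - a) * K + K * (1 - a) = 2 * K * (1 - a) by ring.
by rewrite ler_wpM2l // mulr_ge0 // ltW.
Qed.

Variable rho : R.
Hypotheses (rho_gt0 : 0 < rho) (rho_le : rho <= 2 * K) (l_norm1 : opnorm l = 1).

Local Notation c := (rho / (2 * K)).

Lemma osc_rate_gt0 : 0 < c.
Proof. by rewrite divr_gt0 ?mulr_gt0. Qed.

Lemma osc_rate_sq_le1 : c ^+ 2 <= 1.
Proof.
by rewrite exprn_ile1 ?(ltW osc_rate_gt0) // ler_pdivrMr ?mulr_gt0 // mul1r.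
Qed.

Lemma cone_rho_subZ X Y :
  C X -> X != 0 -> cone_rho C rho Y -> Y != 0 -> C (Y - (c * l Y / l X) *: X).
Proof.
move=> CX X0 RY Y0; have lX := cone_l_gt0 CX X0; have lY0 := cone_l_ge0 RY.1.
have lY : l Y <= `|Y| := le_trans (ler_norm _) (norm_scalar_le _ l_norm1).
have s0 : 0 <= c * l Y / l X by apply/divr_ge0/ltW/lX/mulr_ge0/lY0/ltW/osc_rate_gt0.
have sX : c * l Y / l X * `|X| <= rho / 2 * `|Y|.
  apply: le_trans (ler_wpM2l s0 (cone_norm_le CX)) _.
  have -> : c * l Y / l X * (K * l X) = rho / 2 * l Y by field; rewrite !lt0r_neq0.
  by rewrite ler_wpM2l // divr_ge0 ?ltW.
rewrite -scaleNr; apply: cone_rho_ballD RY _; rewrite normrZ normrN ger0_norm //.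
by apply: le_lt_trans sX _; rewrite ltr_pM2r ?normr_gt0 // ltr_pdivrMr // ltr_pMr // ltr1n.
Qed.

Lemma cone_rho_mutual X Y :
  cone_rho C rho X -> X != 0 -> cone_rho C rho Y -> Y != 0 ->
  exists s s', [/\ 0 < s, 0 < s', s * s' = c ^+ 2, C (Y - s *: X) & C (X - s' *: Y)].
Proof.
move=> RX X0 RY Y0; have lX := cone_l_gt0 RX.1 X0; have lY := cone_l_gt0 RY.1 Y0.
have c0 := osc_rate_gt0.
exists (c * l Y / l X), (c * l X / l Y); split.
- by rewrite divr_gt0 // mulr_gt0.
- by rewrite divr_gt0 // mulr_gt0.
- by rewrite expr2; field; rewrite !lt0r_neq0.
- exact: cone_rho_subZ RX.1 X0 RY Y0.
- exact: cone_rho_subZ RY.1 Y0 RX X0.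
Qed.

Lemma osc_le_cone_rho X Y :
  cone_rho C rho X -> X != 0 -> cone_rho C rho Y -> Y != 0 -> osc_le X Y 1.
Proof.
move=> RX X0 RY Y0; have [s [s' [s0 s'0 ss' CYX CXY]]] := cone_rho_mutual RX X0 RY Y0.
exists s, s'^-1; split=> //.
- by rewrite -(ler_pM2r s'0) mulVf ?lt0r_neq0 // ss' osc_rate_sq_le1.
- rewrite -[Y in _ - Y](scalerK (lt0r_neq0 s'0)) -scalerBr.
  by apply: coneZ CXY; rewrite invr_ge0 ltW.
- by rewrite invrK ss' gerBl sqr_ge0.
Qed.

Lemma osc_le_image (L : {linear E -> E}) u v e :
  into_cone_rho rho L -> osc_le u v e -> osc_le (L u) (L v) ((1 - c ^+ 2) * e).
Proof.
move=> HL uv; have e0 := osc_le_ge0 uv; move: uv => [a [b [a0 ab Cva Cbu gap]]].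
have lam0 : 0 <= 1 - c ^+ 2 by rewrite subr_ge0 osc_rate_sq_le1.
have [/eqP|va0] := eqVneq (v - a *: u) 0.
  rewrite subr_eq0 => /eqP ->; rewrite linearZ.
  by apply: osc_le_trans (osc_le_scaled _ a0); rewrite mulr_ge0.
have [/eqP|bu0] := eqVneq (b *: u - v) 0.
  rewrite subr_eq0 => /eqP <-; rewrite linearZ.
  by apply: osc_le_trans (osc_le_scaled _ (lt_le_trans a0 ab)); rewrite mulr_ge0.
have [RX X0] := HL _ Cva va0; have [RY Y0] := HL _ Cbu bu0.
have [s [s' [s0 s'0 ss' CYX CXY]]] := cone_rho_mutual RX X0 RY Y0.
have eX : L (v - a *: u) = L v - a *: L u by rewrite linearB linearZ.
have eY : L (b *: u - v) = b *: L u - L v by rewrite linearB linearZ.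
rewrite eX eY in CYX CXY.
apply: osc_le_trans (osc_le_shrink a0 ab s0 s'0 _ CXY CYX); rewrite ss' ?osc_rate_sq_le1 //.
exact: ler_wpM2l.
Qed.

End Cone.

Definition normalize (R : realType) (E : normedModType R) (l : E -> R) (x : E) : E :=
  (l x)^-1 *: x.

Section Normalize.
Variables (R : realType) (E : normedModType R) (l : {scalar E}).
Hypothesis l_norm1 : opnorm l = 1.

Lemma normalize_lipschitz (z y : E) m M :
  0 < m -> m <= l y -> `|y| <= M -> `|z - y| <= m / 2 ->
  `|normalize l z - normalize l y| <= (2 * m + 2 * M) / m ^+ 2 * `|z - y|.
Proof.
move=> m0 mly yM zy; set D := `|z - y| in zy *.
have D0 : 0 <= D := normr_ge0 _.
have M0 : 0 <= M := le_trans (normr_ge0 _) yM.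
have lzy : `|l z - l y| <= D by rewrite -linearB norm_scalar_le.
have mlz : m / 2 <= l z.
  by move: lzy; rewrite ler_norml => /andP[+ _]; rewrite lerBrDr; apply: le_trans; lra.
have lz0 : 0 < l z by apply: lt_le_trans mlz; rewrite divr_gt0.
have ly0 : 0 < l y := lt_le_trans m0 mly.
have -> : normalize l z - normalize l y =
          (l z)^-1 *: (z - y) + ((l z)^-1 - (l y)^-1) *: y.
  by rewrite /normalize scalerBr scalerBl addrA subrK.
have -> : (l z)^-1 - (l y)^-1 = (l y - l z) / (l z * l y) by field; rewrite !lt0r_neq0.
apply: le_trans (ler_normD _ _) _; rewrite !normrZ -/D distrC.
rewrite !normfV (gtr0_norm lz0) (gtr0_norm (mulr_gt0 lz0 ly0)).
have i1 : (l z)^-1 <= 2 / m.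
  by rewrite -[2 / m]invf_div lef_pV2 ?posrE ?divr_gt0.
have i2 : (l z * l y)^-1 <= 2 / m ^+ 2.
  rewrite -[2 / _]invf_div lef_pV2 ?posrE ?divr_gt0 ?mulr_gt0 ?exprn_gt0 //.
  rewrite expr2 -mulrA mulrC; apply: ler_pM => //; last exact: ltW.
  exact: divr_ge0 (ltW m0) (ler0n _ 2).
have -> : (2 * m + 2 * M) / m ^+ 2 * D = 2 / m * D + D * (2 / m ^+ 2) * M.
  by field; rewrite lt0r_neq0.
apply: lerD; first exact: ler_wpM2r.
have lzy0 : 0 <= (l z * l y)^-1 by rewrite invr_ge0 ltW ?mulr_gt0.
apply: (ler_pM _ (normr_ge0 _) _ yM); first exact: mulr_ge0.
exact: ler_pM.
Qed.

End Normalize.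

Section NormalizedCone.
Variables (R : realType) (E : normedModType R) (C : set E) (l : {scalar E}) (K rho : R).
Hypotheses (coneC : proper_closed_cone C) (K_gt0 : 0 < K).
Hypothesis l_ge : forall phi, C phi -> K^-1 * `|phi| <= l phi.

Lemma normalize_cone_rho y :
  cone_rho C rho y -> y != 0 -> cone_rho_l1 C rho l (normalize l y).
Proof.
move=> Ry y0; have ly := cone_l_gt0 K_gt0 l_ge Ry.1 y0; rewrite /normalize; split.
  by apply: (cone_rhoZ coneC); rewrite ?invr_gt0.
by rewrite linearZ /= mulVf ?lt0r_neq0.
Qed.

Lemma osc_le_normalize u v e :
  C u -> u != 0 -> C v -> v != 0 -> osc_le C u v e ->
  osc_le C (normalize l u) (normalize l v) e.
Proof.
move=> Cu u0 Cv v0; apply: (osc_leZ coneC) => //; rewrite invr_gt0;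
  exact: (cone_l_gt0 K_gt0 l_ge).
Qed.

Hypotheses (l_norm1 : opnorm l = 1) (rho_gt0 : 0 < rho).

Lemma l_image_ge (L : {linear E -> E}) m phi :
  0 < m -> m <= opnorm L -> into_cone_rho C rho L ->
  cone_rho C rho phi -> l phi = 1 -> rho * m / (4 * K) <= l (L phi).
Proof.
(* phi +- t x stay in C; their images have l-sum 2 l (L phi) and difference 2 t L x. *)
move=> m0 mL HL Rphi lphi.
have [x x1 Lx] : exists2 x : E, `|x| <= 1 & m / 2 < `|L x|.
  by apply: opnorm_lt_witness; [rewrite divr_ge0 ?ltW | apply: lt_le_trans mL; lra].
set t := rho / 2; have t0 : 0 < t by rewrite divr_gt0.
have phi1 : 1 <= `|phi| by rewrite -lphi (le_trans (ler_norm _)) ?norm_scalar_le.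
have tx : `|t *: x| < rho * `|phi|.
  rewrite normrZ gtr0_norm // (@lt_le_trans _ _ rho) //; last first.
    by rewrite ler_peMr ?(ltW rho_gt0).
  by rewrite (@le_lt_trans _ _ t) ?ler_piMr ?(ltW t0) // ltr_pdivrMr // ltr_pMr // ltr1n.
have CA : C (L (phi + t *: x)).
  exact/(into_cone_rho_cone coneC HL)/(cone_rho_ballD Rphi tx).
have CB : C (L (phi - t *: x)).
  by apply/(into_cone_rho_cone coneC HL)/(cone_rho_ballD Rphi); rewrite normrN.
have sumAB : l (L (phi + t *: x)) + l (L (phi - t *: x)) = 2 * l (L phi).
  by rewrite -!linearD addrACA subrr addr0 -mulr2n !linearMn mulr_natl.
have diffAB : L (phi + t *: x) - L (phi - t *: x) = (2 * t) *: L x.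
  rewrite -linearB opprB addrCA [phi + _]addrC addrK -linearZ.
  by rewrite mulr_natl mulr2n scalerDl.
have : t * m <= 2 * K * l (L phi).
  apply: le_trans (_ : `|(2 * t) *: L x| <= _).
    rewrite normrZ gtr0_norm ?mulr_gt0 ?ltr0n // [t * m]mulrC mulrAC ler_pM2r //.
    by rewrite mulrC -ler_pdivrMr ?ltr0n // ltW.
  rewrite -diffAB -mulrA mulrCA -sumAB mulrDr; apply: le_trans (ler_normB _ _) _.
  by apply: lerD; apply: (cone_norm_le K_gt0 l_ge).
by rewrite -ler_pdivrMl ?mulr_gt0 // mulrA mulrC /t; congr (_ <= _); field; rewrite lt0r_neq0.
Qed.

End NormalizedCone.

Section CountablyValued.
Variables (d : measure_display) (Omega : measurableType d).

Lemma countably_valued_measurable_cst (T : Type) (c : T) :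
  countably_valued_measurable (fun _ : Omega => c).
Proof.
split; first by apply: sub_countable (countable1 c); apply: subset_card_le => _ [w _ <-].
move=> x; have [<-|nx] := pselect (c = x).
  by rewrite (_ : _ @^-1` _ = setT) //; apply/seteqP.
by rewrite (_ : _ @^-1` _ = set0) //; apply/seteqP; split=> w //=.
Qed.

Lemma countably_valued_measurable_comp (T U : Type) (F : T -> U) (g : Omega -> T) :
  countably_valued_measurable g -> countably_valued_measurable (F \o g).
Proof.
move=> [cg mg]; split.
  apply: sub_countable (sub_countable (card_image_le F (range g)) cg).
  by apply: subset_card_le => _ [w _ <-]; exists (g w) => //; exists w.
move=> x; have [code code_inj] := countable_injP _ cg.
have -> : (F \o g) @^-1` [set x] = \bigcup_k [set w | code (g w) = k /\ F (g w) = x].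
  apply/seteqP; split=> w /=; last by case=> k _ [].
  by exists (code (g w)).
apply: bigcupT_measurable => k.
have [[_ [[w0 _ <-] [cw0 Fw0]]] | none] :=
  pselect (exists y, range g y /\ code y = k /\ F y = x).
  rewrite (_ : [set w | _] = g @^-1` [set g w0]); first exact: mg.
  apply/seteqP; split=> [w /= [cw _]|w /= ->] //.
  by apply: code_inj; rewrite ?inE ?cw ?cw0 //=; [exists w | exists w0].
rewrite (_ : [set w | _] = set0); first exact: measurable0.
by apply/seteqP; split=> w //= [cw Fw]; apply: none; exists (g w); split=> //; exists w.
Qed.

Variables (R : realType) (E : normedModType R).

Lemma bochner_measurable_cst (c : E) : bochner_measurable (fun _ : Omega => c).
Proof.
exists (fun _ _ => c); split=> [n|e e0]; first exact: countably_valued_measurable_cst.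
by exists 0%N => n _ w; rewrite subrr normr0 ltW.
Qed.

Lemma bochner_measurable_unif_lim (x : nat -> Omega -> E) (f : Omega -> E) (r : R^nat) :
  (forall n, bochner_measurable (x n)) -> r @ \oo --> 0 ->
  (forall n w, `|x n w - f w| <= r n) -> bochner_measurable f.
Proof.
move=> bx r0 xf.
have /choice [g gx] : forall n, exists g : Omega -> E,
    countably_valued_measurable g /\ forall w, `|g w - x n w| <= harmonic n.
  move=> n; have [h [hc hx]] := bx n; have [N hN] := hx _ (harmonic_gt0 n).
  by exists (h N); split=> // w; apply: hN.
exists g; split=> [n|e e0]; first by case: (gx n).
have : (harmonic + r) @ \oo --> (0 : R).
  by rewrite -[0 : R]addr0; apply: cvgD => //; exact: cvg_harmonic.
move=> /cvgr0_norm_le /(_ e e0) [N _ hN]; exists N => n /hN /= he w.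
apply: le_trans (ler_distD (x n w) _ _) (le_trans _ he).
by rewrite ger0_norm ?addr_ge0 ?harmonic_ge0 ?(le_trans (normr_ge0 _) (xf n w)) //;
  apply: lerD; [case: (gx n) | exact: xf].
Qed.

Lemma Linfty_section_normalize (l : {scalar E}) (g : Omega -> E) m :
  opnorm l = 1 -> 0 < m -> Linfty_section g -> (forall w, m <= l (g w)) ->
  Linfty_section (normalize l \o g).
Proof.
move=> l1 m0 [[a [ca ua]] [M gM]] mg.
have M0 : forall w, `|g w| <= `|M| by move=> w; apply: le_trans (gM w) (ler_norm _).
split; last first.
  exists (m^-1 * `|M|) => w; have lg := lt_le_trans m0 (mg w).
  rewrite /= normrZ normfV gtr0_norm //.
  by apply: ler_pM; rewrite ?invr_ge0 ?(ltW lg) // lef_pV2 ?posrE.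
exists (fun n => normalize l \o a n); split=> [n|e e0].
  exact: countably_valued_measurable_comp.
set Q := (2 * m + 2 * `|M|) / m ^+ 2.
have Q0 : 0 < Q.
  rewrite divr_gt0 ?exprn_gt0 // (lt_le_trans (mulr_gt0 (ltr0n _ 2) m0)) //.
  by rewrite lerDl mulr_ge0.
have [N1 hN1] := ua (m / 2) (divr_gt0 m0 (ltr0n _ 2)).
have [N2 hN2] := ua (e / Q) (divr_gt0 e0 Q0).
exists (maxn N1 N2) => n; rewrite geq_max => /andP[n1 n2] w /=.
apply: le_trans (normalize_lipschitz l1 m0 (mg w) (M0 w) (hN1 n n1 w)) _.
by rewrite mulrC -ler_pdivlMr // hN2.
Qed.

End CountablyValued.

Lemma eq_of_near_dist_le (R : realType) (V : normedModType R) (x y : V) (r : R^nat) :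
  r @ \oo --> 0 -> (\forall n \near \oo, `|x - y| <= r n) -> x = y.
Proof.
move=> r0 xy; apply/eqP; rewrite -subr_eq0 -normr_le0.
by rewrite -(cvg_lim _ r0) //; apply: limr_ge => //; exact: cvgP r0.
Qed.

Lemma cauchy_rate_limit (R : realType) (V : completeNormedModType R) (u : nat -> V)
    (r : R^nat) :
  r @ \oo --> 0 -> (forall n k, `|u n - u (n + k)%N| <= r n) ->
  exists2 x, u @ \oo --> x & forall n, `|u n - x| <= r n.
Proof.
move=> r0 ur.
have /cvg_ex [x ux] : cvg (u @ \oo).
  apply: cauchy_cvg; apply: cauchy_exP => e e0.
  have /cvgr0_norm_le /(_ _ (divr_gt0 e0 (ltr0n _ 2))) [N _ hN] := r0.
  exists (u N), N => // n /= Nn; rewrite -ball_normE /= -(subnKC Nn).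
  apply: le_lt_trans (ur _ _) _; apply: le_lt_trans (ler_norm _) _.
  by apply: le_lt_trans (hN N (leqnn _)) _; rewrite ltr_pdivrMr ?ltr_pMr ?ltr1n.
exists x => // n; apply/ler_addgt0Pr => e e0.
have /cvgrPdist_lt /(_ e e0) [M _ hM] := ux.
set m := maxn n M; have nm : (n <= m)%N := leq_maxl n M.
apply: le_trans (ler_distD (u m) _ _) _; rewrite [X in _ + X]distrC.
by apply: lerD; [rewrite -(subnKC nm) ur | apply/ltW/hM/leq_maxr].
Qed.

Lemma cone_rho_l1_neq0 (R : realType) (E : normedModType R) (C : set E) rho
    (l : {scalar E}) x :
  cone_rho_l1 C rho l x -> x != 0.
Proof. by case=> _ lx; apply: contra_eq_neq lx => ->; rewrite linear0 eq_sym oner_neq0. Qed.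

Section NormalizedTransfer.
Variables (R : realType) (E : completeNormedModType R) (C : set E) (l : {scalar E}).
Variables (K rho theta : R) (d : measure_display) (Omega : measurableType d).
Variables (taui : Omega -> Omega) (Lw : Omega -> {linear E -> E}).
Hypotheses (coneC : proper_closed_cone C) (K_gt0 : 0 < K).
Hypothesis l_ge : forall phi, C phi -> K^-1 * `|phi| <= l phi.
Hypotheses (l_norm1 : opnorm l = 1) (rho_gt0 : 0 < rho) (rho_le : rho <= 2 * K).
Hypothesis theta_gt0 : 0 < theta.
Hypothesis Lw_cone : forall w, into_cone_rho C rho (Lw w).
Hypothesis Lw_norm : forall w, theta^-1 <= opnorm (Lw w) /\ opnorm (Lw w) <= theta.

Definition normalized_transfer (g : Omega -> E) : Omega -> E :=
  fun w => normalize l (Lw (taui w) (g (taui w))).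

Local Notation T := normalized_transfer.
Local Notation S := (cone_rho_l1 C rho l).
Local Notation lam := (1 - (rho / (2 * K)) ^+ 2).
Local Notation m := (rho * theta^-1 / (4 * K)). (* [l_image_ge] with [m := theta^-1] *)

Lemma normalized_transfer_cone g w : C (g (taui w)) -> g (taui w) != 0 -> S (T g w).
Proof.
by move=> Cg g0; have [] := Lw_cone (taui w) Cg g0; apply: (normalize_cone_rho coneC K_gt0 l_ge).
Qed.

Lemma iter_normalized_transfer_cone n g : (forall w, S (g w)) -> forall w, S (iter n T g w).
Proof.
move=> Sg; elim: n => //= n IH w.
by apply: normalized_transfer_cone; [case: (IH (taui w)) => [[]] | exact: cone_rho_l1_neq0].
Qed.

Lemma osc_le_normalized_transfer g h e :
  (forall w, S (g w)) -> (forall w, S (h w)) -> (forall w, osc_le C (g w) (h w) e) ->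
  forall w, osc_le C (T g w) (T h w) (lam * e).
Proof.
move=> Sg Sh gh w; set w' := taui w.
have [[[Cg _] _] Sg0] := (Sg w', cone_rho_l1_neq0 (Sg w')).
have [[[Ch _] _] Sh0] := (Sh w', cone_rho_l1_neq0 (Sh w')).
have [[[CLg _] Lg0] [[CLh _] Lh0]] := (Lw_cone w' Cg Sg0, Lw_cone w' Ch Sh0).
apply: (osc_le_normalize coneC K_gt0 l_ge) => //.
exact: (osc_le_image coneC K_gt0 l_ge rho_gt0 rho_le l_norm1 (Lw_cone w') (gh w')).
Qed.

Lemma dist_iter_normalized_transfer g h n w :
  (forall w, S (g w)) -> (forall w, S (h w)) ->
  `|iter n T g w - iter n T h w| <= 2 * K * lam ^+ n.
Proof.
move=> Sg Sh; have Sgn := iter_normalized_transfer_cone _ Sg.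
have Shn := iter_normalized_transfer_cone _ Sh.
have osc_n : forall n w, osc_le C (iter n T g w) (iter n T h w) (lam ^+ n).
  elim=> [|k IH] v /=.
    have [[Rg _] [Rh _]] := (Sg v, Sh v); rewrite expr0.
    by apply: (osc_le_cone_rho coneC K_gt0 l_ge rho_gt0 rho_le l_norm1) => //;
      apply: cone_rho_l1_neq0.
  by rewrite exprS; apply: osc_le_normalized_transfer; [apply: Sgn | apply: Shn | apply: IH].
have [[[Cgn _] lgn] [_ lhn]] := (Sgn n w, Shn n w).
exact: (osc_le_dist K_gt0 l_ge (osc_n n w) Cgn lgn lhn).
Qed.

Lemma lam_abs_lt1 : `|lam| < 1.
Proof.
have c0 : 0 < rho / (2 * K) by rewrite divr_gt0 ?mulr_gt0.
rewrite ger0_norm ?subr_ge0 ?(osc_rate_sq_le1 K_gt0 rho_gt0 rho_le) //.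
by rewrite gtrBl exprn_gt0.
Qed.

Lemma geometric_lam_cvg0 (a : R) : geometric a lam @ \oo --> 0.
Proof. exact: cvg_geometric lam_abs_lt1. Qed.

Lemma opnorm_Lw_gt0 w : 0 < opnorm (Lw w).
Proof. by apply: lt_le_trans (proj1 (Lw_norm w)); rewrite invr_gt0. Qed.

Lemma l_transfer_ge w phi : S phi -> m <= l (Lw w phi).
Proof.
case=> Rphi lphi; have theta_inv : 0 < theta^-1 by rewrite invr_gt0.
exact: (l_image_ge coneC K_gt0 l_ge l_norm1 rho_gt0 theta_inv (proj1 (Lw_norm w))).
Qed.

Lemma norm_transfer_le w phi : S phi -> `|Lw w phi| <= theta * K.
Proof.
case=> [[Cphi _] lphi]; apply: le_trans (opnorm_ler _ (opnorm_Lw_gt0 w)) _.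
apply: ler_pM; rewrite ?(ltW (opnorm_Lw_gt0 w)) ?(proj2 (Lw_norm w)) //.
by rewrite -[K]mulr1 -lphi (cone_norm_le K_gt0 l_ge).
Qed.

Local Notation Q := ((2 * m + 2 * (theta * K)) / m ^+ 2). (* [normalize_lipschitz], M := theta K *)

Lemma l_transfer_lb_gt0 : 0 < m.
Proof. by rewrite divr_gt0 ?mulr_gt0 ?invr_gt0. Qed.

Lemma lipschitz_const_ge0 : 0 <= Q.
Proof.
have m0 := l_transfer_lb_gt0; apply: divr_ge0; last exact: exprn_ge0 (ltW m0).
by apply: addr_ge0; apply: mulr_ge0; rewrite ?ler0n ?(ltW m0) ?mulr_ge0 ?ltW.
Qed.

Lemma normalize_transfer_lipschitz w psi phi :
  S phi -> theta * `|psi - phi| <= m / 2 ->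
  `|normalize l (Lw w psi) - normalize l (Lw w phi)| <= Q * (theta * `|psi - phi|).
Proof.
move=> Sphi small.
have dL : `|Lw w psi - Lw w phi| <= theta * `|psi - phi|.
  rewrite -linearB; apply: le_trans (opnorm_ler _ (opnorm_Lw_gt0 w)) _.
  exact/ler_wpM2r/(proj2 (Lw_norm w)).
apply: le_trans (normalize_lipschitz l_norm1 l_transfer_lb_gt0 (l_transfer_ge w Sphi)
  (norm_transfer_le w Sphi) (le_trans dL small)) _.
by apply: ler_wpM2l dL; apply: lipschitz_const_ge0.
Qed.

Hypothesis Lw_Linfty : forall phi : Omega -> E,
  Linfty_section phi -> Linfty_section (fun w => Lw (taui w) (phi (taui w))).

Lemma Linfty_normalized_transfer g :
  Linfty_section g -> (forall w, S (g w)) -> Linfty_section (T g).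
Proof.
move=> Xg Sg; apply: (Linfty_section_normalize l_norm1 l_transfer_lb_gt0 (Lw_Linfty Xg)).
by move=> w; apply: l_transfer_ge.
Qed.

Lemma Linfty_iter_normalized_transfer n phi0 :
  S phi0 -> Linfty_section (iter n T (fun _ : Omega => phi0)).
Proof.
move=> S0; elim: n => [|n IH] /=.
  by split; [exact: bochner_measurable_cst | exists `|phi0|].
by apply: Linfty_normalized_transfer IH _; apply: iter_normalized_transfer_cone.
Qed.

Lemma cone_l1_limit (u : nat -> E) y (r : R^nat) :
  (forall n, S (u n)) -> u @ \oo --> y -> r @ \oo --> 0 ->
  (forall n, `|u n - y| <= r n) -> C y /\ l y = 1.
Proof.
move=> Su uy r0 ur; split.
  apply: closed_cvg uy; first by case: coneC.
  by apply: nearW => n; case: (Su n) => [[]].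
apply: (eq_of_near_dist_le r0); apply: nearW => n.
have [_ <-] := Su n; rewrite -linearB.
by apply: le_trans (norm_scalar_le _ l_norm1) _; rewrite distrC.
Qed.

Lemma normalized_transfer_fixed_of_unif_lim (x : nat -> Omega -> E) f :
  (forall n w, S (x n w)) -> (forall n, x n.+1 = T (x n)) ->
  (forall n w, `|x n w - f w| <= geometric (2 * K) lam n) -> T f = f.
Proof.
move=> Sx xS xf; apply/funext => w; apply/esym.
apply: (eq_of_near_dist_le (geometric_lam_cvg0 (2 * K * (lam + Q * theta)))).
have eps0 : 0 < m / 2 / theta by apply: divr_gt0 => //; apply: divr_gt0 l_transfer_lb_gt0 _.
near=> n.
have small : geometric (2 * K) lam n <= m / 2 / theta.
  near: n; have /cvgr0_norm_le /(_ _ eps0) r0 := geometric_lam_cvg0 (2 * K).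
  exact: filterS (fun n => le_trans (ler_norm _)) r0.
have dn : theta * `|f (taui w) - x n (taui w)| <= theta * geometric (2 * K) lam n.
  by apply: ler_wpM2l; [exact: ltW | rewrite distrC; exact: xf].
have h1 : `|f w - x n.+1 w| <= geometric (2 * K) lam n.+1 by rewrite distrC; exact: xf.
have h2 : `|T f w - T (x n) w| <= Q * (theta * geometric (2 * K) lam n).
  apply: le_trans (normalize_transfer_lipschitz _ (Sx n (taui w)) _) _.
    by apply: le_trans dn _; rewrite mulrC -ler_pdivlMr.
  by apply: ler_wpM2l dn; apply: lipschitz_const_ge0.
have -> : f w - T f w = (f w - x n.+1 w) + (T (x n) w - T f w) by rewrite -xS addrA subrK.
apply: le_trans (ler_normD _ _) _; rewrite [X in _ + X]distrC.
apply: le_trans (lerD h1 h2) _.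
suff -> : geometric (2 * K) lam n.+1 + Q * (theta * geometric (2 * K) lam n) =
          geometric (2 * K * (lam + Q * theta)) lam n by [].
by rewrite /= exprS; ring.
Unshelve. all: by end_near.
Qed.

Lemma normalized_transfer_fixed_point phi0 :
  S phi0 -> exists f, [/\ Linfty_section f, forall w, S (f w) & T f = f].
Proof.
move=> S0; set x := fun n => iter n T (fun _ : Omega => phi0).
have Sx : forall n w, S (x n w) by move=> n; apply: iter_normalized_transfer_cone.
have /choice [f xf] : forall w, exists y, x ^~ w @ \oo --> y /\
    forall n, `|x n w - y| <= geometric (2 * K) lam n.
  move=> w; have [|y xy xyr] := cauchy_rate_limit (u := x ^~ w) (geometric_lam_cvg0 (2 * K)).
    move=> n k; rewrite /x iterD /=.
    by apply: dist_iter_normalized_transfer => // v; apply: iter_normalized_transfer_cone.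
  by exists y.
have Tf : T f = f.
  by apply: (normalized_transfer_fixed_of_unif_lim Sx) => // n w; apply: (xf w).2.
have Cf w : C (f w) /\ l (f w) = 1.
  exact: cone_l1_limit (Sx ^~ w) (xf w).1 (geometric_lam_cvg0 _) (xf w).2.
exists f; split=> // [|w].
  split; last first.
    by exists K => w; have [Cfw lfw] := Cf w; rewrite -[K]mulr1 -lfw (cone_norm_le K_gt0 l_ge).
  apply: (bochner_measurable_unif_lim (x := x) _ (geometric_lam_cvg0 (2 * K))).
    by move=> n; case: (Linfty_iter_normalized_transfer n S0).
  by move=> n w; apply: (xf w).2.
rewrite -Tf; apply: normalized_transfer_cone; first exact: (Cf _).1.
by apply: contra_eq_neq (Cf (taui w)).2 => ->; rewrite linear0 eq_sym oner_neq0.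
Qed.

Lemma normalized_transfer_fixed_point_unique f g :
  (forall w, S (f w)) -> (forall w, S (g w)) -> T f = f -> T g = g -> f = g.
Proof.
move=> Sf Sg Tf Tg; apply/funext => w.
apply: (eq_of_near_dist_le (geometric_lam_cvg0 (2 * K))); apply: nearW => n.
by rewrite -(iter_fix n Tf) -(iter_fix n Tg); exact: dist_iter_normalized_transfer.
Qed.

End NormalizedTransfer.

Theorem lemma2p1 (R : realType) (E : completeNormedModType R)
  (C : set E) (l : {scalar E}) (K rho vartheta : R)
  (M : set {linear E -> E})
  (d : measure_display) (Omega : measurableType d) (P : probability Omega R)
  (tau taui : Omega -> Omega) (Lw : Omega -> {linear E -> E}) :
  proper_closed_cone C ->
  (* (H1) *)
  continuous l -> opnorm l = 1 -> 1 <= K ->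
  (forall phi, C phi -> l phi >= K^-1 * `|phi|) ->
  (* (H2) *)
  0 < rho -> rho <= 1 -> (exists phi, cone_rho C rho phi /\ phi != 0) ->
  (* the collection M *)
  1 <= vartheta ->
  (forall L : {linear E -> E}, M L ->
     [/\ continuous L,
         (* (H3) *)
         (forall phi, C phi -> phi != 0 -> cone_rho C rho (L phi) /\ L phi != 0) &
         (* (H4) *)
         vartheta^-1 <= opnorm L /\ opnorm L <= vartheta]) ->
  (* the random dynamical system *)
  invertible_mp P tau taui -> ergodic P tau ->
  (forall w, M (Lw w)) ->
  (* L : X -> X is well defined *)
  (forall phi : Omega -> E, Linfty_section phi ->
     Linfty_section (fun w => Lw (taui w) (phi (taui w)))) ->
  exists f : Omega -> E,
    let fixpt (g : Omega -> E) :=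
      [/\ Linfty_section g,
          (forall w, cone_rho_l1 C rho l (g w)) &
          (forall w, g w = (l (Lw (taui w) (g (taui w))))^-1 *:
                             Lw (taui w) (g (taui w)))] in
    fixpt f /\ forall g, fixpt g -> g = f.
Proof.
move=> coneC _ l_norm1 K_ge1 l_ge rho_gt0 rho_le1 [phi [Rphi phi0]] theta_ge1 HM _ _ MLw HX.
have K_gt0 : 0 < K := lt_le_trans ltr01 K_ge1.
have rho_le : rho <= 2 * K.
  by rewrite (le_trans rho_le1) // (le_trans K_ge1) // ler_peMl ?(ltW K_gt0) // ler1n.
have theta_gt0 : 0 < vartheta := lt_le_trans ltr01 theta_ge1.
have Lw_cone w : into_cone_rho C rho (Lw w) by have [] := HM _ (MLw w).
have Lw_norm w : vartheta^-1 <= opnorm (Lw w) /\ opnorm (Lw w) <= vartheta.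
  by have [] := HM _ (MLw w).
have S0 := normalize_cone_rho coneC K_gt0 l_ge Rphi phi0.
have [f [Xf Sf Tf]] := normalized_transfer_fixed_point coneC K_gt0 l_ge l_norm1 rho_gt0
  rho_le theta_gt0 Lw_cone Lw_norm HX S0.
exists f; split=> [|g [_ Sg g_fix]]; first by split=> // w; rewrite -{1}Tf.
have Tg : normalized_transfer l taui Lw g = g by apply/funext => w; rewrite [RHS]g_fix.
exact: (normalized_transfer_fixed_point_unique coneC K_gt0 l_ge l_norm1 rho_gt0 rho_le
  Lw_cone Sg Sf Tg Tf).
Qed.
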